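(* Let $X$ be a Hermitian $d\times d$ matrix of rank $2$. Then $$\frac{24\,\|X\|_1^2\,\mathrm{tr}\big(P_{\mathrm{Sym}^4}X^{\otimes4}\big)}{\big(\|X\|_2^2+\mathrm{tr}(X)^2\big)^3}\le\frac5{81}\big(95+32\sqrt{10}\big)\approx12.1107 .$$ If in addition $\mathrm{tr}(X)=0$, the left-hand side equals $12$.
   Context: $P_{\mathrm{Sym}^4}$ is the orthogonal projector onto the totally symmetric subspace of $(\mathbb{C}^d)^{\otimes 4}$. $\|\cdot\|_1$, $\|\cdot\|_2$ are the trace norm and Hilbert–Schmidt norm. *)

(* Scalars: an arbitrary numClosedFieldType C (e.g. algC, a model of the complex numbers). *)
From HB Require Import structures.
From mathcomp Require Import all_boot all_order all_algebra all_fingroup.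
Set Implicit Arguments. Unset Strict Implicit. Unset Printing Implicit Defensive.
Import Order.TTheory GRing.Theory Num.Theory.
Local Open Scope ring_scope.

Section QDefs.
Variable C : numClosedFieldType.

Definition adjmx m n (A : 'M[C]_(m, n)) : 'M[C]_(n, m) := (map_mx Num.conj A)^T.

Definition is_hermitian n (X : 'M[C]_n) : Prop := adjmx X = X.

(* Schatten norms: singular values = square roots of the eigenvalues of X^* X
   (X^* X is normal, so spectral_diag gives its eigenvalues with multiplicity). *)
Definition trace_norm n (X : 'M[C]_n) : C :=
  \sum_(i < n) sqrtC ((spectral_diag (adjmx X *m X)) 0 i).

Definition hs_norm n (X : 'M[C]_n) : C := sqrtC (\tr (adjmx X *m X)).

(* (C^d)^{\otimes 4}: basis indexed by multi-indices 'I_4 -> 'I_d. Operators are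
   matrices indexed by this finite type. *)
Definition mi (d : nat) := {ffun 'I_4 -> 'I_d}.

Definition tensor4 d (X : 'M[C]_d) (i j : mi d) : C := \prod_(k < 4) X (i k) (j k).

(* permutation operator W_s : e_{j_1}⊗...⊗e_{j_4} |-> tensor factor k moved to slot s k,
   i.e. <i| W_s |j> = [i = j ∘ s^{-1}] *)
Definition permop d (s : 'S_4) (i j : mi d) : C :=
  (i == [ffun k => j ((s^-1)%g k)])%:R.

Definition PSym4 d (i j : mi d) : C := (4`!%:R)^-1 * \sum_(s : 'S_4) permop s i j.

Definition tr4 d (A B : mi d -> mi d -> C) : C := \sum_(i : mi d) \sum_(j : mi d) A i j * B j i.

Definition trPSym4X4 d (X : 'M[C]_d) : C := tr4 (@PSym4 d) (tensor4 X).

End QDefs.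

(* Diagonalise X = U^* diag(λ) U with U unitary. Then ‖X‖₁ = Σ|λᵢ|, ‖X‖₂² = Σλᵢ², tr X = Σλᵢ,
   and unitarity of U collapses tr(P_Sym X^⊗4) to (1/4!) Σ_σ Σ_f Π_k λ_(f k) over the index
   functions f : {1..4} → {1..d} with f ∘ σ = f. When X has rank 2 only the two nonzero
   eigenvalues a, c matter; grouping such f by the subset B = f⁻¹(a) and counting the
   |B|! (4 - |B|)! permutations stabilising B gives tr(P_Sym X^⊗4) = Σ_(m ≤ 4) a^m c^(4-m).
   What remains is an inequality in two real variables, with denominator (2(a² + ac + c²))³:
   for ac ≥ 0 it holds with room to spare, for ac < 0 it follows from a sum-of-squares
   certificate over ℚ(√10) in s = a - c and m = -ac, and a + c = 0 gives exactly 12. *)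

From HB Require Import structures.
From mathcomp Require Import all_boot all_order all_algebra all_fingroup.
From mathcomp Require Import ring.
Import Order.TTheory GRing.Theory Num.Theory.
Set Implicit Arguments. Unset Strict Implicit. Unset Printing Implicit Defensive.
Local Open Scope ring_scope.
Local Open Scope sesquilinear_scope.

Section SetStabiliser.
Variable T : finType.

Definition setstab (A : {set T}) : {set {perm T}} :=
  [set s : {perm T} | [forall x, (s x \in A) == (x \in A)]].

Lemma setstab_restr_inj (A : {set T}) s : s \in setstab A ->
  injective (fun x => if x \in A then s x else x).
Proof.
rewrite inE => /forallP sA x y /=.
case: ifP => xA; case: ifP => yA.
- exact: perm_inj.
- by move=> e; move: xA; rewrite -(eqP (sA x)) e yA.
- by move=> e; move: yA; rewrite -(eqP (sA y)) -e xA.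
- by [].
Qed.

Lemma setstabC (A : {set T}) : setstab (~: A) = setstab A.
Proof.
by apply/setP=> s; rewrite !inE; apply: eq_forallb => x; rewrite !inE eqb_negLR negbK.
Qed.

Lemma card_setstab (A : {set T}) : #|setstab A| = (#|A|`! * #|~: A|`!)%N.
Proof.
rewrite -!card_perm -(cardsE (perm_on A)) -(cardsE (perm_on (~: A))) -cardsX.
set D := setX _ _.
pose mul (p : {perm T} * {perm T}) := (p.1 * p.2)%g.
have mulE p : p \in D -> forall x, mul p x = if x \in A then p.1 x else p.2 x.
  case: p => u v /setXP[]; rewrite !inE /= => uA vA x; rewrite /mul permM /=.
  case: ifP => xA; first by rewrite (out_perm vA) // inE negbK perm_closed.
  by rewrite (out_perm uA) ?xA.
have mulK p : p \in D -> forall x,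
    p.1 x = (if x \in A then mul p x else x) /\ p.2 x = (if x \in A then x else mul p x).
  move=> pD x; rewrite mulE //; case: p pD => u v /setXP[]; rewrite !inE /= => uA vA.
  by case: (boolP (x \in A)) => xA; rewrite ?(negbTE xA) ?xA; split=> //;
    [rewrite (out_perm vA) // inE negbK | rewrite (out_perm uA)].
rewrite -(card_in_imset (f := mul)) => [|p q pD qD e]; last first.
  rewrite [p]surjective_pairing [q]surjective_pairing; congr pair; apply/permP => x.
    by rewrite (proj1 (mulK _ pD x)) (proj1 (mulK _ qD x)) e.
  by rewrite (proj2 (mulK _ pD x)) (proj2 (mulK _ qD x)) e.
congr #|(_ : {set _})|; apply/setP=> s; apply/idP/imsetP => [sA|[p pD ->]].
  have sAC : s \in setstab (~: A) by rewrite setstabC.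
  exists (perm (setstab_restr_inj sA), perm (setstab_restr_inj sAC)).
    by rewrite !inE; apply/andP; split; apply/subsetP=> x;
      rewrite inE /= permE; case: ifP => // _; rewrite eqxx.
  apply/permP=> x; rewrite /mul permM /= !permE.
  move: sA; rewrite inE => /forallP/(_ x)/eqP sx.
  by case: (boolP (x \in A)) => xA; rewrite ?inE ?sx ?xA.
rewrite inE; apply/forallP => x; rewrite mulE //.
case: p pD => u v /setXP[]; rewrite !inE /= => uA vA.
case: ifP => xA; first by rewrite (perm_closed x uA) xA.
by move: (perm_closed x vA); rewrite !inE xA => /negbTE ->.
Qed.

Variable R : comNzRingType.

Lemma prod_if_mem (B : {set T}) (a c : R) :
  \prod_k (if k \in B then a else c) = a ^+ #|B| * c ^+ (#|T| - #|B|).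
Proof.
rewrite (bigID (mem B)) /= -(cardsC B) addKn.
rewrite (eq_bigr (fun _ => a)) => [|k -> //].
rewrite [X in _ * X](eq_bigr (fun _ => c)) => [|k /negbTE -> //].
by rewrite !prodr_const; congr (_ * _ ^+ _); apply: eq_card => k; rewrite !inE.
Qed.

Lemma sum_set_by_card (G : nat -> R) :
  \sum_(B : {set T}) G #|B| = \sum_(m < #|T|.+1) G m *+ 'C(#|T|, m).
Proof.
rewrite (partition_big (fun B : {set T} => (inord #|B| : 'I_#|T|.+1)) predT) //=.
apply: eq_bigr => m _.
rewrite (eq_bigl (fun B : {set T} => #|B| == m)) => [|B]; last first.
  by rewrite -val_eqE /= inordK // ltnS max_card.
rewrite (eq_bigr (fun _ => G m)) => [|B /eqP -> //].
by rewrite sumr_const -card_draws cardsE.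
Qed.

Lemma sum_perm_setstab (a c : R) :
  \sum_(s : {perm T}) \sum_(B : {set T})
     (\prod_k (if k \in B then a else c)) * \prod_k (((s k \in B) == (k \in B))%:R : R)
  = #|T|`!%:R * \sum_(m < #|T|.+1) a ^+ m * c ^+ (#|T| - m).
Proof.
rewrite exchange_big /=.
transitivity (\sum_(B : {set T}) (a ^+ #|B| * c ^+ (#|T| - #|B|)) *+ (#|B|`! * (#|T| - #|B|)`!)).
  apply: eq_bigr => B _; rewrite -mulr_sumr prod_if_mem -mulr_natr; congr (_ * _).
  rewrite -(cardsC B) addKn -card_setstab -sum1_card natr_sum [RHS]big_mkcond /=.
  apply: eq_bigr => s _; rewrite inE.
  case: (boolP [forall k, _]) => [/forallP sB | /forallPn[k /negbTE nsk]].
    by rewrite big1 // => k _; rewrite sB.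
  by rewrite (bigD1 k) //= nsk mul0r.
rewrite (sum_set_by_card (fun m => a ^+ m * c ^+ (#|T| - m) *+ (m`! * (#|T| - m)`!))).
rewrite mulr_sumr; apply: eq_bigr => m _.
rewrite -mulrnA mulr_natl mulrC; congr (_ *+ _).
by rewrite mulnC bin_fact // -ltnS.
Qed.

End SetStabiliser.

Section TwoPointSupport.
Variables (R : comNzRingType) (T I : finType) (l : I -> R) (i0 i1 : I).
Hypothesis i01 : i0 != i1.
Hypothesis l_supp : forall i, i != i0 -> i != i1 -> l i = 0.

Lemma sum_supp2 (F : I -> R) : (forall i, i != i0 -> i != i1 -> F i = 0) ->
  \sum_i F i = F i0 + F i1.
Proof.
move=> F_supp; rewrite (bigD1 i0) //= (bigD1 i1) 1?eq_sym //=.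
by rewrite big1 ?addr0 // => i /andP[? ?]; apply: F_supp.
Qed.

Lemma sum_ffun_supp2 (s : {perm T}) :
  \sum_(f : {ffun T -> I}) (\prod_k l (f k)) * \prod_k ((f (s k) == f k)%:R : R)
  = \sum_(B : {set T}) (\prod_k (if k \in B then l i0 else l i1))
        * \prod_k (((s k \in B) == (k \in B))%:R : R).
Proof.
pose two_valued (f : {ffun T -> I}) := [forall k, (f k == i0) || (f k == i1)].
rewrite (bigID two_valued) /= [X in _ + X]big1 ?addr0; last first.
  move=> f /forallPn[k]; rewrite negb_or => /andP[f0 f1].
  by rewrite (bigD1 k) //= l_supp // !mul0r.
(* A function into {i0, i1} is determined by the preimage of i0. *)
pose g (B : {set T}) : {ffun T -> I} := [ffun k => if k \in B then i0 else i1].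
have gE B k : (g B k == i0) = (k \in B).
  by rewrite ffunE; case: (k \in B); rewrite ?eqxx // eq_sym (negbTE i01).
rewrite (reindex_onto g (fun f => [set k | f k == i0])) => [|f /forallP f2]; last first.
  apply/ffunP => k; rewrite !ffunE inE.
  by case/orP: (f2 k) => /eqP ->; rewrite ?eqxx // eq_sym (negbTE i01).
apply: eq_big => [B | B _].
  apply/andP; split; last by apply/eqP/setP => k; rewrite inE gE.
  by apply/forallP => k; rewrite ffunE; case: (k \in B); rewrite eqxx ?orbT.
congr (_ * _); apply: eq_bigr => k _; first by rewrite ffunE; case: (k \in B).
rewrite !ffunE; case: (s k \in B); case: (k \in B); rewrite ?eqxx //=.
  by rewrite (negbTE i01).
by rewrite eq_sym (negbTE i01).
Qed.

End TwoPointSupport.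


Lemma adjmxE (C : numClosedFieldType) m n (A : 'M[C]_(m, n)) : adjmx A = A ^t*.
Proof. by rewrite /adjmx map_trmx. Qed.

Lemma char_poly_conj (F : fieldType) n (Q A : 'M[F]_n) : Q \in unitmx ->
  char_poly (invmx Q *m A *m Q) = char_poly A.
Proof.
move=> Qu; rewrite /char_poly /char_poly_mx.
have -> : 'X%:M - map_mx polyC (invmx Q *m A *m Q) =
    map_mx polyC (invmx Q) *m ('X%:M - map_mx polyC A) *m map_mx polyC Q.
  rewrite mulmxBr mulmxBl !map_mxM; congr (_ - _).
  by rewrite mul_mx_scalar -scalemxAl -map_mxM mulVmx // map_mx1 scalemx1.
by rewrite !det_mulmx mulrAC -det_mulmx -map_mxM mulVmx // map_mx1 det1 mul1r.
Qed.

Lemma char_poly_diag (F : fieldType) n (l : 'rV[F]_n) :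
  char_poly (diag_mx l) = \prod_i ('X - (l 0 i)%:P).
Proof.
rewrite char_poly_trig ?diag_mx_is_trig //.
by apply: eq_bigr => i _; rewrite mxE eqxx mulr1n.
Qed.

Lemma perm_eq_diag_conj (F : fieldType) n (P Q : 'M[F]_n) (l m : 'rV[F]_n) :
  P \in unitmx -> Q \in unitmx ->
  invmx P *m diag_mx l *m P = invmx Q *m diag_mx m *m Q ->
  perm_eq [seq l 0 i | i <- enum 'I_n] [seq m 0 i | i <- enum 'I_n].
Proof.
move=> Pu Qu e; apply: prod_XsubC_eq; rewrite !big_map.
by have := congr1 char_poly e; rewrite !char_poly_conj // !char_poly_diag.
Qed.

Lemma rank_diag_mx (F : fieldType) n (l : 'rV[F]_n) :
  \rank (diag_mx l) = #|[set i | l 0 i != 0]|.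
Proof.
rewrite -sum1_card big_mkcond /=.
elim: n l => [|n IHn] l; first by rewrite big_ord0 flatmx0 mxrank0.
move: l; change (forall l : 'rV[F]_(1 + n), \rank (diag_mx l) =
  (\sum_(i < 1 + n) if i \in [set i | l 0%R i != 0%R] then 1 else 0)%N) => l.
rewrite -[l]hsubmxK diag_mx_row rank_diag_block_mx [\rank (diag_mx (rsubmx l))]IHn.
rewrite big_split_ord /= big_ord1.
congr (_ + _)%N; last by apply: eq_bigr => i _; rewrite !inE row_mxEr.
rewrite inE row_mxEl rank_rV; set v := lsubmx l.
suff -> : (diag_mx v == 0) = (v 0 0 == 0) by case: eqP.
apply/eqP/eqP => [/matrixP/(_ 0 0)|v0]; first by rewrite !mxE eqxx mulr1n.
by apply/matrixP => i j; move: v0; rewrite !ord1 !mxE => ->; rewrite mul0rn.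
Qed.

Lemma trPSym4X4E (C : numClosedFieldType) d (X : 'M[C]_d) :
  trPSym4X4 X =
  (4`!%:R)^-1 * \sum_(s : 'S_4) \sum_(j : mi d) \prod_k X (j k) (j ((s^-1)%g k)).
Proof.
rewrite /trPSym4X4 /tr4 /PSym4 /permop /tensor4.
under eq_bigr => i _ do under eq_bigr => j _ do rewrite -mulrA.
under eq_bigr => i _ do rewrite -mulr_sumr.
rewrite -mulr_sumr; congr (_ * _).
under eq_bigr => i _ do under eq_bigr => j _ do rewrite mulr_suml.
under eq_bigr => i _ do rewrite exchange_big /=.
rewrite exchange_big /=; apply: eq_bigr => s _.
rewrite exchange_big /=; apply: eq_bigr => j _.
rewrite (bigD1 [ffun k => j ((s^-1)%g k)]) //= eqxx mul1r [X in _ + X]big1 ?addr0.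
  by apply: eq_bigr => k _; rewrite ffunE.
by move=> i /negbTE ->; rewrite mul0r.
Qed.

Section UnitaryConjugate.
Variables (C : numClosedFieldType) (n : nat) (P : 'M[C]_n) (l : 'rV[C]_n).
Hypothesis P_unitary : P \is unitarymx.

Let X := P^t* *m diag_mx l *m P.

Lemma mxtrace_unitary_conj (A : 'M[C]_n) : \tr (P^t* *m A *m P) = \tr A.
Proof. by rewrite mxtrace_mulC mulmxA (unitarymxP P_unitary) mul1mx. Qed.

Lemma mxtrace_unitary_conj_diag : \tr X = \sum_i l 0 i.
Proof. by rewrite mxtrace_unitary_conj mxtrace_diag. Qed.

Lemma mxrank_unitary_conj_diag : \rank X = #|[set i | l 0 i != 0]|.
Proof.
have Pu := unitarymx_unit P_unitary.
rewrite /X -invmx_unitary // mxrankMfree ?row_free_unit //.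
by rewrite (eqmxMfull _ _) ?row_full_unit ?unitmx_inv // rank_diag_mx.
Qed.

Let l2 := \row_i (`|l 0 i| ^+ 2).

Lemma adjmx_mul_unitary_conj_diag : adjmx X *m X = P^t* *m diag_mx l2 *m P.
Proof.
rewrite /X adjmxE !trmx_mul !map_mxM trmxCK tr_diag_mx map_diag_mx.
rewrite !mulmxA mulmxtVK // -!mulmxA; congr (_ *m _); rewrite mulmxA; congr (_ *m _).
by apply/matrixP => i j; rewrite mul_diag_mx !mxE mulrnAr normCKC.
Qed.

Lemma hs_norm_unitary_conj_diag : hs_norm X ^+ 2 = \sum_i `|l 0 i| ^+ 2.
Proof.
rewrite /hs_norm sqrtCK adjmx_mul_unitary_conj_diag mxtrace_unitary_conj mxtrace_diag.
by apply: eq_bigr => i _; rewrite mxE.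
Qed.

Lemma trace_norm_unitary_conj_diag : trace_norm X = \sum_i `|l 0 i|.
Proof.
set A := adjmx X *m X; set mu := spectral_diag A.
have /orthomx_spectralP AE : A \is normalmx.
  apply/orthomx_spectral_subproof; exists (P, l2) => //=.
  by rewrite /A adjmx_mul_unitary_conj_diag invmx_unitary.
have mu_l2 : perm_eq [seq mu 0 i | i <- enum 'I_n] [seq l2 0 i | i <- enum 'I_n].
  apply: perm_eq_diag_conj (spectral_unit A) (unitarymx_unit P_unitary) _.
  by rewrite -AE /A adjmx_mul_unitary_conj_diag invmx_unitary.
rewrite /trace_norm -/A -/mu.
have sumE (f : 'I_n -> C) :
    \sum_i sqrtC (f i) = \sum_(x <- [seq f i | i <- enum 'I_n]) sqrtC x.
  by rewrite big_map big_enum.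
rewrite (sumE (fun i => mu 0 i)) (perm_big _ mu_l2) -sumE.
by apply: eq_bigr => i _; rewrite mxE sqrCK.
Qed.

Variable T : finType.

Lemma unitary_conj_diag_entry p q : X p q = \sum_r (P r p)^* * l 0 r * P r q.
Proof. by rewrite mxE; apply: eq_bigr => r _; rewrite mul_mx_diag !mxE. Qed.

Lemma unitary_rows_orthonormal a b : \sum_p (P a p)^* * P b p = (b == a)%:R.
Proof.
have /matrixP/(_ b a) := unitarymxP P_unitary; rewrite !mxE => <-.
by apply: eq_bigr => p _; rewrite !mxE mulrC.
Qed.

Lemma sum_prod_unitary_conj_diag (s : {perm T}) :
  \sum_(j : {ffun T -> 'I_n}) \prod_k X (j k) (j ((s^-1)%g k)) =
  \sum_(f : {ffun T -> 'I_n}) (\prod_k l 0 (f k)) * \prod_k ((f (s k) == f k)%:R : C).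
Proof.
under eq_bigr => j _.
  under eq_bigr => k _ do rewrite unitary_conj_diag_entry.
  rewrite bigA_distr_bigA /=.
  over.
rewrite exchange_big /=; apply: eq_bigr => f _.
under eq_bigr => j _.
  rewrite big_split big_split /= [X in X * _]mulrC -mulrA.
  rewrite [X in _ * (_ * X)](reindex_perm s) /=.
  rewrite [X in _ * (_ * X)](eq_bigr (fun k => P (f (s k)) (j k))) => [|k _]; last first.
    by rewrite permK.
  rewrite -big_split /=.
  over.
rewrite -mulr_sumr; congr (_ * _).
rewrite -(bigA_distr_bigA (fun k p => (P (f k) p)^* * P (f (s k)) p)) /=.
by apply: eq_bigr => k _; rewrite unitary_rows_orthonormal.
Qed.

End UnitaryConjugate.

Definition homsym4 (R : comNzRingType) (a c : R) :=
  a ^+ 4 + a ^+ 3 * c + a ^+ 2 * c ^+ 2 + a * c ^+ 3 + c ^+ 4.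

Lemma trPSym4X4_unitary_conj_diag_supp2 (C : numClosedFieldType) n
    (P : 'M[C]_n) (l : 'rV[C]_n) (i0 i1 : 'I_n) :
  P \is unitarymx -> i0 != i1 -> (forall i, i != i0 -> i != i1 -> l 0 i = 0) ->
  trPSym4X4 (P^t* *m diag_mx l *m P) = homsym4 (l 0 i0) (l 0 i1).
Proof.
move=> P_unitary i01 l_supp; rewrite trPSym4X4E.
under eq_bigr => s _ do rewrite sum_prod_unitary_conj_diag // (sum_ffun_supp2 i01 l_supp).
rewrite sum_perm_setstab card_ord !big_ord_recr big_ord0 /=.
by rewrite mulKf ?pnatr_eq0 //= /homsym4; ring.
Qed.

Section RankTwoInequality.
Variables (R : numFieldType) (r : R).
Hypotheses (r_ge0 : 0 <= r) (r_sqr : r ^+ 2 = 10%:R).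

Lemma sos_rank2_opposite_sign (s m : R) : s \is Num.real -> 0 <= m ->
  4%:R * m <= s ^+ 2 ->
  0 <= (475%:R + 160%:R * r) * (s ^+ 2 - 3%:R * m) ^+ 3
       - 243%:R * s ^+ 2 * (s ^+ 4 - 5%:R * s ^+ 2 * m + 5%:R * m ^+ 2).
Proof.
move=> s_real m_ge0 m_le.
set W := 15%:R * m - 10%:R * s ^+ 2; set V := 2%:R * s ^+ 2.
set L0 := 670%:R * s ^+ 2 - 1425%:R * m; set L1 := 220%:R * s ^+ 2 - 480%:R * m.
have certificate : 25%:R * ((475%:R + 160%:R * r) * (s ^+ 2 - 3%:R * m) ^+ 3
      - 243%:R * s ^+ 2 * (s ^+ 4 - 5%:R * s ^+ 2 * m + 5%:R * m ^+ 2)) =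
    (W + r * V) ^+ 2 * (L0 + r * L1)
    - (r ^+ 2 - 10%:R) * (2%:R * W * V * L1 + V ^+ 2 * L0 + r * V ^+ 2 * L1).
  by rewrite /W /V /L0 /L1; ring.
rewrite r_sqr subrr mul0r subr0 in certificate.
rewrite -(pmulr_rge0 _ (ltr0n R 25)) certificate.
have L_pos : L0 + r * L1 = (670%:R + 220%:R * r) * (s ^+ 2 - 4%:R * m)
    + (1255%:R + 400%:R * r) * m by rewrite /L0 /L1; ring.
apply: mulr_ge0.
  have [r_real m_real] := (ger0_real r_ge0, ger0_real m_ge0).
  by rewrite -realEsqr !(realD, realB, realN, realM, realX) // ?realn.
rewrite L_pos; apply: addr_ge0; apply: mulr_ge0; rewrite ?subr_ge0 //.
  by rewrite addr_ge0 ?mulr_ge0.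
by rewrite addr_ge0 ?mulr_ge0.
Qed.

Let K := 5%:R / 81%:R * (95%:R + 32%:R * r).

Lemma rank2_bound_same_sign (a c : R) : a \is Num.real -> c \is Num.real ->
  0 <= a * c ->
  24%:R * (a + c) ^+ 2 * homsym4 a c <= K * (2%:R * (a ^+ 2 + a * c + c ^+ 2)) ^+ 3.
Proof.
move=> a_real c_real ac_ge0; set q := a ^+ 2 + a * c + c ^+ 2.
have q_ge0 : 0 <= q.
  by apply: addr_ge0; [apply: addr_ge0 |]; rewrite // -realEsqr.
rewrite -subr_ge0.
have -> : K * (2%:R * q) ^+ 3 - 24%:R * (a + c) ^+ 2 * homsym4 a c =
    8%:R / 81%:R * ((151%:R + 160%:R * r) * q ^+ 3 +
      81%:R * ((a - c) ^+ 2 * q ^+ 2 + 3%:R * ((a + c) ^+ 2) ^+ 2 * (a * c))).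
  by rewrite /K /homsym4 /q; field.
have [amc_sqr apc_sqr] : 0 <= (a - c) ^+ 2 /\ 0 <= (a + c) ^+ 2.
  by split; rewrite -realEsqr ?realB ?realD.
apply: mulr_ge0; first by rewrite divr_ge0.
apply: addr_ge0.
  by apply: mulr_ge0; [rewrite addr_ge0 ?mulr_ge0 | apply: exprn_ge0].
apply: mulr_ge0 => //; apply: addr_ge0; apply: mulr_ge0 => //; first exact: exprn_ge0.
by apply: mulr_ge0 => //; apply: exprn_ge0.
Qed.

Lemma rank2_bound_opposite_sign (a c : R) : a \is Num.real -> c \is Num.real ->
  a * c < 0 ->
  24%:R * (a - c) ^+ 2 * homsym4 a c <= K * (2%:R * (a ^+ 2 + a * c + c ^+ 2)) ^+ 3.
Proof.
move=> a_real c_real ac_lt0; rewrite -subr_ge0.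
have -> : K * (2%:R * (a ^+ 2 + a * c + c ^+ 2)) ^+ 3 - 24%:R * (a - c) ^+ 2 * homsym4 a c =
    8%:R / 81%:R * ((475%:R + 160%:R * r) * ((a - c) ^+ 2 - 3%:R * - (a * c)) ^+ 3
      - 243%:R * (a - c) ^+ 2 * ((a - c) ^+ 4 - 5%:R * (a - c) ^+ 2 * - (a * c)
        + 5%:R * (- (a * c)) ^+ 2)).
  by rewrite /K /homsym4; field.
rewrite mulr_ge0 ?divr_ge0 // sos_rank2_opposite_sign ?realB ?oppr_ge0 ?(ltW ac_lt0) //.
have -> : (a - c) ^+ 2 = (a + c) ^+ 2 + 4%:R * - (a * c) by ring.
by rewrite lerDr -realEsqr realD.
Qed.

Lemma rank2_ratio_le (a c : R) : a \is Num.real -> c \is Num.real -> a != 0 ->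
  24%:R * (`|a| + `|c|) ^+ 2 * homsym4 a c / ((a ^+ 2 + c ^+ 2) + (a + c) ^+ 2) ^+ 3 <= K.
Proof.
move=> a_real c_real a_neq0.
have -> : (a ^+ 2 + c ^+ 2) + (a + c) ^+ 2 = 2%:R * (a ^+ 2 + a * c + c ^+ 2) by ring.
have q_gt0 : 0 < a ^+ 2 + a * c + c ^+ 2.
  have -> : a ^+ 2 + a * c + c ^+ 2 = ((a + 2%:R * c) ^+ 2 + 3%:R * a ^+ 2) / 4%:R.
    by field.
  apply: divr_gt0 => //; apply: ltr_wpDl; first by rewrite -realEsqr realD ?realM.
  by rewrite mulr_gt0 // real_exprn_even_gt0.
rewrite ler_pdivrMr ?exprn_gt0 ?mulr_gt0 //.
have [ac_ge0 | ac_lt0] := real_ge0P (realM a_real c_real).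
  have -> : (`|a| + `|c|) ^+ 2 = (a + c) ^+ 2.
    by rewrite !sqrrD !real_normK // -normrM ger0_norm.
  exact: rank2_bound_same_sign.
have -> : (`|a| + `|c|) ^+ 2 = (a - c) ^+ 2.
  by rewrite sqrrD sqrrB !real_normK // -normrM ltr0_norm // mulNrn.
exact: rank2_bound_opposite_sign.
Qed.

Lemma rank2_ratio_traceless (a c : R) : a \is Num.real -> a != 0 -> a + c = 0 ->
  24%:R * (`|a| + `|c|) ^+ 2 * homsym4 a c / ((a ^+ 2 + c ^+ 2) + (a + c) ^+ 2) ^+ 3
  = 12%:R.
Proof.
move=> a_real a_neq0 ac0; rewrite -[c](addKr a) ac0 addr0 normrN /homsym4 subrr.
have -> : (`|a| + `|a|) ^+ 2 = 4%:R * a ^+ 2 by rewrite -(real_normK a_real); ring.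
by field; rewrite sqrrN -mulr2n mulrn_eq0 /= sqrf_eq0.
Qed.

End RankTwoInequality.

Theorem mainTheorem10 (C : numClosedFieldType) (d : nat) (X : 'M[C]_d) :
  X \is hermsymmx -> \rank X = 2%N ->
  let LHS := 24%:R * trace_norm X ^+ 2 * trPSym4X4 X /
             (hs_norm X ^+ 2 + \tr X ^+ 2) ^+ 3 in
  LHS <= 5%:R / 81%:R * (95%:R + 32%:R * sqrtC 10%:R)
  /\ (\tr X = 0 -> LHS = 12%:R).
Proof.
move=> X_herm X_rank LHS.
set P := spectralmx X; set lam := spectral_diag X.
have P_unitary : P \is unitarymx := spectral_unitarymx X.
have XE : X = P^t* *m diag_mx lam *m P.
  by rewrite -invmx_unitary //; apply/orthomx_spectralP/hermitian_normalmx.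
have lam_real i : lam 0 i \is Num.real.
  exact: mxOverP (hermitian_spectral_diag_real X_herm) 0 i.
have /cards2P[i0 [i1 [i01 lam_supp]]] : #|[set i | lam 0 i != 0]| == 2.
  by rewrite -(mxrank_unitary_conj_diag _ P_unitary) -XE X_rank.
have lam0 i : i != i0 -> i != i1 -> lam 0 i = 0.
  move=> ? ?; apply/eqP/negbNE; have /setP/(_ i) := lam_supp.
  by rewrite !inE => ->; apply/norP.
have lam_i0_neq0 : lam 0 i0 != 0 by have /setP/(_ i0) := lam_supp; rewrite !inE eqxx.
rewrite /LHS XE trace_norm_unitary_conj_diag // hs_norm_unitary_conj_diag //.
rewrite mxtrace_unitary_conj_diag //.
rewrite (trPSym4X4_unitary_conj_diag_supp2 P_unitary i01 lam0).
rewrite !(sum_supp2 i01) ?real_normK // => [|i *|i *]; last 2 first.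
- by rewrite lam0 ?normr0 ?expr0n.
- by rewrite lam0 ?normr0.
have r_ge0 : 0 <= sqrtC 10%:R :> C by rewrite sqrtC_ge0 ler0n.
have r_sqr : sqrtC 10%:R ^+ 2 = 10%:R :> C by rewrite sqrtCK.
split; first exact: rank2_ratio_le r_ge0 r_sqr _ _ (lam_real i0) (lam_real i1) lam_i0_neq0.
exact: rank2_ratio_traceless.
Qed.
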